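(* Let $n,m\geq1$. Let $\bm{p}_{j}=(p_{1j},\ldots,p_{nj})^{T}\in\mathbb{R}^{n}$ for $j=1,\ldots,m$, let $w_{j}>0$ and $d_{j}>0$ and $h_{j}\in\mathbb{R}$ for $j=1,\ldots,m$, let $b_{ik}\in\mathbb{R}\cup\{-\infty\}$ for $i,k=1,\ldots,n$, and let $f_{i}\leq g_{i}$ be reals for $i=1,\ldots,n$. Consider the problem of minimizing over $\bm{x}=(x_{1},\ldots,x_{n})^{T}\in\mathbb{R}^{n}$ $$\max_{1\leq j\leq m}\Big(w_{j}\max_{1\leq i\leq n}|x_{i}-p_{ij}|+h_{j}\Big)$$ subject to $\max_{1\leq i\leq n}|x_{i}-p_{ij}|\leq d_{j}$ for $j=1,\ldots,m$, $b_{ik}+x_{k}\leq x_{i}$ for $i,k=1,\ldots,n$, and $f_{i}\leq x_{i}\leq g_{i}$ for $i=1,\ldots,n$. Suppose that 1. $\max_{1\leq i_{1},\ldots,i_{k-1}\leq n,\ i_{0}=i_{k}=i}(b_{i_{0}i_{1}}+\cdots+b_{i_{k-1}i_{k}})\leq0$ for all $i,k=1,\ldots,n$; 2. $b_{ik}^{\ast}+\max\{\max_{1\leq l\leq m}(p_{kl}-d_{l}),f_{k}\}\leq\min\{\min_{1\leq j\leq m}(p_{ij}+d_{j}),g_{i}\}$ for all $i,k=1,\ldots,n$. Then the minimum value of the problem is $$\theta=\max_{1\leq i,k\leq n}\max_{1\leq j,l\leq m}\max\Bigg\{\frac{w_{l}h_{j}}{w_{j}+w_{l}}+\frac{w_{j}h_{l}}{w_{j}+w_{l}}+\frac{w_{j}w_{l}}{w_{j}+w_{l}}(b_{ik}^{\ast}-p_{ij}+p_{kl}),\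 h_{j}+w_{j}\big(b_{ik}^{\ast}-p_{ij}+\max\{p_{kl}-d_{l},f_{k}\}\big),\ h_{l}+w_{l}\big(b_{ik}^{\ast}-\min\{p_{ij}+d_{j},g_{i}\}+p_{kl}\big)\Bigg\},$$ and all solution vectors $\bm{x}=(x_{i})$ are given by $x_{i}=\max_{1\leq k\leq n}(b_{ik}^{\ast}+u_{k})$, $i=1,\ldots,n$, where the parameter vector $\bm{u}=(u_{k})$ satisfies, for each $k=1,\ldots,n$, $$\max_{1\leq j\leq m}\max\left\{\frac{h_{j}-\theta}{w_{j}}+p_{kj},\ p_{kj}-d_{j},\ f_{k}\right\}\leq u_{k}\leq\min_{1\leq i\leq n}\min_{1\leq j\leq m}\left(\min\left\{\frac{\theta-h_{j}}{w_{j}}+p_{ij},\ p_{ij}+d_{j},\ g_{i}\right\}-b_{ik}^{\ast}\right).$$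
   Context: Conventions: $-\infty+a=-\infty$ for any $a$, and $a-(-\infty)=+\infty$ for real $a$. For $i,k=1,\ldots,n$ define $$\beta_{ik}=\max_{1\leq l\leq n-1}\ \max_{1\leq i_{1},\ldots,i_{l-1}\leq n,\ i_{0}=i,\ i_{l}=k}(b_{i_{0}i_{1}}+\cdots+b_{i_{l-1}i_{l}})$$ (maximum over all index sequences of length $l$ from $i$ to $k$; an empty maximum is $-\infty$), and set $b_{ik}^{\ast}=\beta_{ik}$ if $i\neq k$ and $b_{ii}^{\ast}=\max\{\beta_{ii},0\}$. *)

From HB Require Import structures.
From mathcomp Require Import all_boot all_order all_algebra.
From mathcomp Require Import constructive_ereal.
Set Implicit Arguments. Unset Strict Implicit. Unset Printing Implicit Defensive.
Import Order.TTheory GRing.Theory Num.Theory.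
Local Open Scope ring_scope.
Local Open Scope ereal_scope.

Section Defs.
Variables (R : realFieldType) (n : nat).
Variable b : 'I_n -> 'I_n -> \bar R.

Fixpoint pathw (i : 'I_n) (s : seq 'I_n) (k : 'I_n) : \bar R :=
  match s with
  | [::] => b i k
  | j :: s' => b i j + pathw j s' k
  end.

(* beta_{ik}: maximum over lengths l = 1..n-1 (t = l-1 intermediate indices)
   of the path weights from i to k; empty max = -oo *)
Definition beta (i k : 'I_n) : \bar R :=
  \big[maxe/-oo]_(t < n.-1) \big[maxe/-oo]_(s : t.-tuple 'I_n) pathw i s k.

Definition bstar (i k : 'I_n) : \bar R :=
  if i == k then maxe (beta i i) 0 else beta i k.

Definition chebd (x p : 'I_n -> R) : \bar R :=
  \big[maxe/-oo]_(i < n) (`|x i - p i|%R)%:E.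
End Defs.

From HB Require Import structures.
From mathcomp Require Import all_boot all_order all_algebra.
From mathcomp Require Import constructive_ereal.
From mathcomp Require Import ring lra zify.
Import Order.TTheory GRing.Theory Num.Theory.
Local Open Scope ring_scope.
Local Open Scope ereal_scope.
Set Implicit Arguments. Unset Strict Implicit. Unset Printing Implicit Defensive.

(* Fix a level phi.  A vector x is feasible with objective at most phi iff it is a
   subsolution of b (b_ik + x_k <= x_i) lying in a box lower_phi <= x <= upper_phi
   that collects the distance, objective and bound constraints.  As b has no cycle
   of positive weight, every walk from i to k weighs at most b*_ik; hence the
   subsolutions of b are those of b*, and the subsolutions of b in the box are
   exactly the vectors x_i = max_k (b*_ik + u_k) with lower <= u and b* u <= upper.
   They exist iff b*_ik + lower_k <= upper_i for all i, k.  Of the nine inequalities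
   hidden in this condition, the four free of phi are hypothesis H2, and the other
   five say that the three terms of theta are at most phi: so theta is the least
   level at which the problem is feasible. *)

Lemma not_uniq_split (T : eqType) (s : seq T) :
  ~~ uniq s -> exists s1 c s2 s3, s = s1 ++ c :: s2 ++ c :: s3.
Proof.
elim: s => [|x s IHs] //=; rewrite negb_and negbK => /orP[/splitPr[s2 s3]|/IHs].
  by exists [::], x, s2, s3.
by case=> s1 [c [s2 [s3 ->]]]; exists (x :: s1), c, s2, s3.
Qed.

Lemma ord_seq_repeat n (s : seq 'I_n) : (n < size s)%N ->
  exists s1 c s2 s3, s = s1 ++ c :: s2 ++ c :: s3.
Proof.
move=> ltns; apply: not_uniq_split; apply: contraL ltns => /card_uniqP <-.
by rewrite -leqNgt -[n in (_ <= n)%N]card_ord max_card.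
Qed.

Section WeightedBounds.
Variable R : realFieldType.
Local Open Scope ring_scope.

Lemma ler_DM_pdiv (w h z t : R) : 0 < w -> (h + w * z <= t) = (z <= (t - h) / w).
Proof. by move=> w0; rewrite ler_pdivlMr // mulrC lerBrDl. Qed.

Lemma mixed_term_le (wj wl hj hl z t : R) : 0 < wj -> 0 < wl ->
  (wl * hj / (wj + wl) + wj * hl / (wj + wl) + wj * wl / (wj + wl) * z <= t)
  = (z <= (t - hj) / wj + (t - hl) / wl).
Proof.
move=> wj0 wl0; rewrite -subr_ge0 -[X in _ = X]subr_ge0.
set N := wl * hj + wj * hl + wj * wl * z.
have -> : t - (wl * hj / (wj + wl) + wj * hl / (wj + wl) + wj * wl / (wj + wl) * z)
    = ((wj + wl) * t - N) / (wj + wl).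
  by rewrite /N; field; lra.
have -> : (t - hj) / wj + (t - hl) / wl - z = ((wj + wl) * t - N) / (wj * wl).
  by rewrite /N; field; lra.
by rewrite !pmulr_lge0 // invr_gt0 ?addr_gt0 ?mulr_gt0.
Qed.

Lemma pair_term_le (wj wl hj hl pij pkl be lo up t : R) :
  0 < wj -> 0 < wl -> be + lo <= up ->
  (Num.max (Num.max
     (wl * hj / (wj + wl) + wj * hl / (wj + wl) + wj * wl / (wj + wl) * (be - pij + pkl))
     (hj + wj * (be - pij + lo)))
     (hl + wl * (be - up + pkl)) <= t)
  = (be + Num.max ((hl - t) / wl + pkl) lo <= Num.min ((t - hj) / wj + pij) up).
Proof.
move=> wj0 wl0 lo_up.
rewrite addr_maxr le_min !ge_max mixed_term_le // !ler_DM_pdiv //.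
rewrite -[hl - t]opprB mulNr.
by apply/idP/idP => [/andP[/andP[? ?] ?] | /andP[/andP[? ?] /andP[? ?]]];
  repeat (apply/andP; split); lra.
Qed.

End WeightedBounds.

Section ExtendedReals.
Variable R : realFieldType.

Lemma adde_bigmax_le (I : finType) (a c : \bar R) (F : I -> \bar R) :
  (forall i, a + F i <= c) -> a + \big[maxe/-oo]_i F i <= c.
Proof.
move=> aFc; elim/big_ind: _ => [|x y axc ayc|i _]; last exact: aFc.
  by rewrite addeNy leNye.
by rewrite adde_maxr ge_max axc ayc.
Qed.

Lemma leeBrDl_neqy (e : \bar R) (a c : R) :
  e != +oo -> (a%:E <= c%:E - e) = (e + a%:E <= c%:E).
Proof.
case: e => [r||] //= _; first by rewrite -EFinD !lee_fin lerBrDl.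
by rewrite leey leNye.
Qed.

Lemma le_EFin_bound (t : R) (y : \bar R) :
  (forall phi : R, y <= phi%:E -> (t <= phi)%R) -> t%:E <= y.
Proof.
case: y => [r||] Hy; [exact: Hy | exact: leey | exfalso].
by have := Hy (t - 1)%R (leNye _); lra.
Qed.

Lemma lee_DM_pdiv (w h phi : R) (e : \bar R) : (0 < w)%R ->
  (w%:E * e + h%:E <= phi%:E) = (e <= ((phi - h) / w)%:E).
Proof.
move=> w0; case: e => [r||].
- by rewrite -EFinM -EFinD !lee_fin addrC ler_DM_pdiv.
- by rewrite gt0_muley ?lte_fin.
- by rewrite gt0_muleNy ?lte_fin // !leNye.
Qed.

Lemma chebd_le n (x q : 'I_n -> R) (c : R) :
  chebd x q <= c%:E <-> forall i, (q i - c <= x i <= q i + c)%R.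
Proof.
split=> [/bigmax_leP[_ le_c] i | le_c]; first by rewrite -ler_distl -lee_fin le_c.
by apply: bigmax_le => [|i _]; rewrite ?leNye // lee_fin ler_distl.
Qed.

End ExtendedReals.

Section Walks.
Variables (R : realFieldType) (n : nat) (b : 'I_n -> 'I_n -> \bar R).

Fixpoint walkw (s : seq 'I_n) : \bar R :=
  if s is x :: ((y :: _) as s') then b x y + walkw s' else 0.

Lemma walkw_cat s1 c s2 :
  walkw (s1 ++ c :: s2) = walkw (rcons s1 c) + walkw (c :: s2).
Proof.
elim: s1 => [|x [|y s1] IHs1] /=; first by rewrite add0e.
  by rewrite adde0.
by move: IHs1 => /= ->; rewrite addeA.
Qed.

Lemma walkw_cut s1 c s2 s3 :
  walkw (s1 ++ c :: s2 ++ c :: s3) = walkw (s1 ++ c :: s3) + walkw (c :: rcons s2 c).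
Proof.
rewrite !walkw_cat -cat_cons walkw_cat /=.
by rewrite addeA addeAC.
Qed.

Lemma pathwE i s k : pathw b i s k = walkw (i :: rcons s k).
Proof. by elim: s i => [|j s IHs] i /=; rewrite ?adde0 ?IHs. Qed.

Lemma bstar_ge0 i : 0 <= bstar b i i.
Proof. by rewrite /bstar eqxx le_max lexx orbT. Qed.

Lemma beta_le_bstar i k : beta b i k <= bstar b i k.
Proof. by rewrite /bstar; case: eqP => [->|_]; rewrite ?le_max ?lexx. Qed.

Lemma bstar_lty : (forall i k, b i k != +oo) -> forall i k, bstar b i k < +oo.
Proof.
move=> b_neqy.
have beta_lty i k : beta b i k < +oo.
  apply: bigmax_lt => // t _; apply: bigmax_lt => // s _.
  elim: {s}(tval s) i => [|j s IHs] i /=; first by rewrite ltey b_neqy.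
  by apply: lte_add_pinfty; rewrite // ltey b_neqy.
by move=> i k; rewrite /bstar; case: eqP => [->|_]; rewrite ?gt_max ?beta_lty ?ltry.
Qed.

Section Subsolutions.
Variable x : 'I_n -> R.
Hypothesis x_sub : forall i k, b i k + (x k)%:E <= (x i)%:E.

Lemma walkw_le_sub s i : walkw (i :: s) <= (x i - x (last i s))%:E.
Proof.
elim: s i => [|j s IHs] i /=; first by rewrite subrr.
rewrite -[(x i - _)%R](subrKA (x j)) EFinD.
by apply: leeD; [rewrite EFinB leeBrDr | exact: IHs].
Qed.

Lemma subsolution_bstar i k : bstar b i k + (x k)%:E <= (x i)%:E.
Proof.
have beta_le i' k' : beta b i' k' <= (x i' - x k')%:E.
  apply: bigmax_le => [|t _]; first exact: leNye.
  apply: bigmax_le => [|s _]; first exact: leNye.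
  by rewrite pathwE (le_trans (walkw_le_sub _ _)) // last_rcons.
rewrite -leeBrDr // -EFinB /bstar; case: eqP => [->|_]; last exact: beta_le.
by rewrite ge_max beta_le subrr lexx.
Qed.

End Subsolutions.

Section NonpositiveCycles.
Hypothesis cycles_le0 : forall (i : 'I_n) (t : 'I_n),
  \big[maxe/-oo]_(s : t.-tuple 'I_n) pathw b i s i <= 0.

Lemma closed_walkw_le0 s i : last i s = i -> walkw (i :: s) <= 0.
Proof.
have [N] := ubnP (size s); elim: N s i => // N IHN s i /ltnSE le_s_N closed.
have [le_s_n|lt_n_s] := leqP (size s) n.
  case/lastP: s closed le_s_N le_s_n => [|s j]; first by rewrite /= lexx.
  rewrite last_rcons => -> _.
  rewrite size_rcons -pathwE => lt_s_n.
  apply: le_trans (cycles_le0 i (Ordinal lt_s_n)).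
  exact: (le_bigmax _ (fun s' : (size s).-tuple 'I_n => pathw b i s' i) (in_tuple s)).
have [s1 [c [s2 [s3 Es]]]] := ord_seq_repeat lt_n_s.
have size_s : size s = (size s1 + size s2 + size s3).+2.
  by rewrite Es !size_cat /= size_cat /=; lia.
rewrite Es last_cat /= last_cat /= in closed.
rewrite (_ : i :: s = (i :: s1) ++ c :: s2 ++ c :: s3) ?Es // walkw_cut.
apply: adde_le0; apply: IHN; rewrite ?size_cat ?size_rcons /= ?last_cat ?last_rcons //; lia.
Qed.

Lemma walkw_le_bstar s i : walkw (i :: s) <= bstar b i (last i s).
Proof.
have [N] := ubnP (size s); elim: N s i => // N IHN s i /ltnSE le_s_N.
have [lt_s_n|le_n_s] := ltnP (size s) n.
  case/lastP: s le_s_N lt_s_n => [|s k] _; first by rewrite bstar_ge0.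
  rewrite last_rcons size_rcons -pathwE => lt_s_n.
  have lt_s_n1 : (size s < n.-1)%N by lia.
  apply: le_trans (beta_le_bstar i k); apply: le_trans (le_bigmax _ _ (Ordinal lt_s_n1)).
  exact: (le_bigmax _ (fun s' : (size s).-tuple 'I_n => pathw b i s' k) (in_tuple s)).
have [s1 [c [s2 [s3 Es]]]] := @ord_seq_repeat n (i :: s) le_n_s.
have [s' Es'] : exists s', s1 ++ c :: s3 = i :: s'.
  by case: s1 Es => [|x' s1] [-> _]; eexists.
have last_s' : last i s' = last i s.
  rewrite -[RHS]/(last i (i :: s)) -[LHS]/(last i (i :: s')) Es -Es'.
  by rewrite !last_cat /= last_cat.
have size_s' : (size s' < N)%N.
  move: le_s_N (congr1 size Es) (congr1 size Es').
  by rewrite /= !size_cat /= size_cat /=; lia.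
rewrite Es walkw_cut Es' -last_s'.
rewrite -[X in _ <= X]adde0; apply: leeD; first exact: IHN.
by apply: closed_walkw_le0; rewrite last_rcons.
Qed.

Lemma b_bstar_le i k l : b i k + bstar b k l <= bstar b i l.
Proof.
have b_beta l' : b i k + beta b k l' <= bstar b i l'.
  apply: adde_bigmax_le => t; apply: adde_bigmax_le => s.
  by rewrite pathwE; have := walkw_le_bstar (k :: rcons s l') i; rewrite /= last_rcons.
rewrite /bstar; case: eqP => [<-|_]; last exact: b_beta.
by rewrite adde_maxr ge_max b_beta adde0; have := walkw_le_bstar [:: k] i; rewrite /= adde0.
Qed.

Lemma subsolutions_in_box (lo hi : 'I_n -> \bar R) (x : 'I_n -> R) :
  (forall i k, b i k + (x k)%:E <= (x i)%:E) /\ (forall i, lo i <= (x i)%:E <= hi i)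
  <-> exists u : 'I_n -> R,
        (forall k, lo k <= (u k)%:E /\ forall i, bstar b i k + (u k)%:E <= hi i) /\
        forall i, (x i)%:E = \big[maxe/-oo]_(k < n) (bstar b i k + (u k)%:E).
Proof.
split=> [[x_sub x_box] | [u [u_box x_E]]].
  exists x; split=> [k | i].
    have /andP[lo_x _] := x_box k; split=> // i.
    by apply: le_trans (subsolution_bstar x_sub i k) _; have /andP[] := x_box i.
  apply/eqP; rewrite eq_le; apply/andP; split.
    by apply: (bigmax_sup i) => //; rewrite lee_paddl ?bstar_ge0.
  by apply: bigmax_le => [|k _]; [exact: leNye | exact: subsolution_bstar].
split=> [i k | i]; rewrite !x_E.
  apply: adde_bigmax_le => l; rewrite addeA; apply: (bigmax_sup l) => //.
  by rewrite leeD2r ?b_bstar_le.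
apply/andP; split.
  apply: le_trans (proj1 (u_box i)) _; apply: (bigmax_sup i) => //.
  by rewrite lee_paddl ?bstar_ge0.
by apply: bigmax_le => [|k _]; [exact: leNye | exact: (proj2 (u_box k))].
Qed.

Lemma subsolution_in_box_exists (lo hi : 'I_n -> \bar R) :
  (forall k, lo k \is a fin_num) -> (forall i, hi i < +oo) ->
  (forall i k, bstar b i k + lo k <= hi i) ->
  exists x : 'I_n -> R,
    (forall i k, b i k + (x k)%:E <= (x i)%:E) /\ (forall i, lo i <= (x i)%:E <= hi i).
Proof.
move=> lo_fin hi_lty lo_hi; pose u k := fine (lo k).
have u_E k : lo k = (u k)%:E by rewrite fineK.
pose y i := \big[maxe/-oo]_(k < n) (bstar b i k + (u k)%:E).
have y_fin i : y i \is a fin_num.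
  apply/fin_numPlt/andP; split.
    apply: lt_le_trans (ltNyr (u i)) _; apply: (bigmax_sup i) => //.
    by rewrite lee_paddl ?bstar_ge0.
  apply: le_lt_trans (hi_lty i); apply: bigmax_le => [|k _]; first exact: leNye.
  by rewrite -u_E lo_hi.
exists (fun i => fine (y i)); apply/subsolutions_in_box; exists u.
by split=> [k | i]; [rewrite -u_E; split | rewrite fineK].
Qed.

End NonpositiveCycles.
End Walks.

Section MinimaxLocation.
Variables (R : realFieldType) (n m : nat).
Variables (p : 'I_n -> 'I_m -> R) (w d h : 'I_m -> R).
Variables (b : 'I_n -> 'I_n -> \bar R) (f g : 'I_n -> R).
Hypothesis w_gt0 : forall j, (0 < w j)%R.

Definition objective (x : 'I_n -> R) : \bar R :=
  \big[maxe/-oo]_(j < m) ((w j)%:E * chebd x (fun i => p i j) + (h j)%:E).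

Definition feasible (x : 'I_n -> R) : Prop :=
  [/\ forall j, chebd x (fun i => p i j) <= (d j)%:E,
      forall i k, b i k + (x k)%:E <= (x i)%:E
    & forall i, (f i <= x i <= g i)%R].

Definition lower (phi : R) k j : R :=
  (Num.max (Num.max ((h j - phi) / w j + p k j) (p k j - d j)) (f k))%R.

Definition upper (phi : R) i j : R :=
  (Num.min (Num.min ((phi - h j) / w j + p i j) (p i j + d j)) (g i))%R.

Definition box_lo phi k : \bar R := \big[maxe/-oo]_(j < m) (lower phi k j)%:E.

Definition box_hi phi i : \bar R := \big[mine/+oo]_(j < m) (upper phi i j)%:E.

Lemma objective_le x phi : objective x <= phi%:E <->
  forall j i, ((h j - phi) / w j + p i j <= x i <= (phi - h j) / w j + p i j)%R.
Proof.
have term_le j : (w j)%:E * chebd x (fun i => p i j) + (h j)%:E <= phi%:E <->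
    forall i, ((h j - phi) / w j + p i j <= x i <= (phi - h j) / w j + p i j)%R.
  have shiftE i : (p i j - (phi - h j) / w j <= x i <= p i j + (phi - h j) / w j)%R
      = ((h j - phi) / w j + p i j <= x i <= (phi - h j) / w j + p i j)%R.
    by rewrite addrC [(p i j + _)%R]addrC -mulNr opprB.
  by rewrite lee_DM_pdiv // chebd_le; split=> le_c i; rewrite ?shiftE // -shiftE.
split=> [/bigmax_leP[_ obj_le] j | obj_le]; first exact/term_le/obj_le.
by apply: bigmax_le => [|j _]; [exact: leNye | exact/term_le].
Qed.

Lemma box_boundsP phi i (y : R) :
  box_lo phi i <= y%:E <= box_hi phi i <->
  forall j,
    [/\ ((h j - phi) / w j + p i j <= y)%R, (p i j - d j <= y)%R & (f i <= y)%R] /\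
    [/\ (y <= (phi - h j) / w j + p i j)%R, (y <= p i j + d j)%R & (y <= g i)%R].
Proof.
split=> [/andP[/bigmax_leP[_ lo_y] /bigmin_geP[_ y_hi]] j | y_bd].
  move: (lo_y j isT) (y_hi j isT); rewrite !lee_fin /lower /upper !ge_max !le_min.
  by move=> /andP[/andP[-> ->] ->] /andP[/andP[-> ->] ->].
apply/andP; split.
  apply: bigmax_le => [|j _]; first exact: leNye.
  by rewrite lee_fin /lower !ge_max; have [[-> -> ->] _] := y_bd j.
apply: le_bigmin => [|j _]; first exact: leey.
by rewrite lee_fin /upper !le_min; have [_ [-> -> ->]] := y_bd j.
Qed.

Hypothesis m_gt0 : (0 < m)%N.

Lemma feasible_objective_le x phi :
  feasible x /\ objective x <= phi%:E <->
  (forall i k, b i k + (x k)%:E <= (x i)%:E) /\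
  (forall i, box_lo phi i <= (x i)%:E <= box_hi phi i).
Proof.
split=> [[[x_d x_sub x_fg] /objective_le x_obj] | [x_sub x_box]].
  split=> // i; apply/box_boundsP => j.
  have /chebd_le/(_ i)/andP[? ?] := x_d j; have /andP[? ?] := x_obj j i.
  by have /andP[? ?] := x_fg i; split; split.
have x_bd i := (box_boundsP phi i (x i)).1 (x_box i).
split; first split=> // [j | i].
- by apply/chebd_le => i; have [[_ -> _] [_ -> _]] := x_bd i j.
- by have [[_ _ ->] [_ _ ->]] := x_bd i (Ordinal m_gt0).
by apply/objective_le => j i; have [[-> _ _] [-> _ _]] := x_bd i j.
Qed.

Definition theta_term (e : \bar R) i k j l : \bar R :=
  maxe (maxe
    ((w l * h j / (w j + w l) + w j * h l / (w j + w l))%R%:E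
       + (w j * w l / (w j + w l))%R%:E * (e - (p i j)%:E + (p k l)%:E))
    ((h j)%:E + (w j)%:E * (e - (p i j)%:E + (Num.max (p k l - d l) (f k))%:E)))
    ((h l)%:E + (w l)%:E * (e - (Num.min (p i j + d j) (g i))%:E + (p k l)%:E)).

Definition theta : \bar R :=
  \big[maxe/-oo]_(i < n) \big[maxe/-oo]_(k < n)
  \big[maxe/-oo]_(j < m) \big[maxe/-oo]_(l < m) theta_term (bstar b i k) i k j l.

Lemma theta_term_fin_num (be : R) i k j l : theta_term be%:E i k j l \is a fin_num.
Proof. by rewrite /theta_term -!EFin_max. Qed.

Lemma theta_term_Ny i k j l : theta_term -oo i k j l = -oo.
Proof.
by rewrite /theta_term !addNye !gt0_muleNy ?lte_fin ?divr_gt0 ?mulr_gt0 ?addr_gt0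
  // !addeNy !maxxx.
Qed.

Hypothesis b_neqy : forall i k, b i k != +oo.
Hypothesis cycles_le0 : forall (i : 'I_n) (t : 'I_n),
  \big[maxe/-oo]_(s : t.-tuple 'I_n) pathw b i s i <= 0.
Hypothesis box_compatible : forall i k : 'I_n,
  bstar b i k + maxe (\big[maxe/-oo]_(l < m) (p k l - d l)%:E) (f k)%:E
  <= mine (\big[mine/+oo]_(j < m) (p i j + d j)%:E) (g i)%:E.

Lemma bstar_neqy i k : bstar b i k != +oo.
Proof. by rewrite -ltey bstar_lty. Qed.

Lemma bstar_box_compatible i k j l :
  bstar b i k + (Num.max (p k l - d l) (f k))%:E <= (Num.min (p i j + d j) (g i))%:E.
Proof.
apply: le_trans (le_trans _ (box_compatible i k)) _.
  by rewrite leeD2l // EFin_max le_max2 // (le_bigmax _ (fun l => (p k l - d l)%:E)).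
by rewrite EFin_min le_min2 // (bigmin_le _ j (fun j => (p i j + d j)%:E)).
Qed.

Lemma theta_term_le phi i k j l :
  (theta_term (bstar b i k) i k j l <= phi%:E)
  = (bstar b i k + (lower phi k l)%:E <= (upper phi i j)%:E).
Proof.
have := bstar_box_compatible i k j l; have := bstar_neqy i k.
case: (bstar b i k) => [be||] // _ compat; last by rewrite theta_term_Ny !leNye.
rewrite -EFinD lee_fin in compat.
rewrite /theta_term -!EFin_max -EFinD !lee_fin /lower /upper.
by rewrite -(maxA _ (p k l - d l)%R) -(minA _ (p i j + d j)%R) pair_term_le.
Qed.

Lemma theta_le phi :
  theta <= phi%:E <-> forall i k, bstar b i k + box_lo phi k <= box_hi phi i.
Proof.
split=> [theta_le_phi i k | compat].
  apply: adde_bigmax_le => l; apply: le_bigmin => [|j _]; first exact: leey.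
  rewrite -theta_term_le; apply: le_trans theta_le_phi.
  by apply: (bigmax_sup i) => //; apply: (bigmax_sup k) => //;
     apply: (bigmax_sup j) => //; apply: (bigmax_sup l).
apply: bigmax_le => [|i _]; first exact: leNye.
apply: bigmax_le => [|k _]; first exact: leNye.
apply: bigmax_le => [|j _]; first exact: leNye.
apply: bigmax_le => [|l _]; first exact: leNye.
have lo_le := le_bigmax -oo (fun l => (lower phi k l)%:E) l.
have hi_ge := bigmin_le +oo j (fun j => (upper phi i j)%:E).
by rewrite theta_term_le (le_trans (le_trans (leeD2l _ lo_le) (compat i k)) hi_ge).
Qed.

Hypothesis n_gt0 : (0 < n)%N.

Lemma theta_fin_num : theta \is a fin_num.
Proof.
pose i0 := Ordinal n_gt0; pose j0 := Ordinal m_gt0.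
apply/fin_numPlt/andP; split.
  have [be bstarE] : exists be, bstar b i0 i0 = be%:E.
    case: (bstar b i0 i0) (bstar_ge0 b i0) (bstar_neqy i0 i0) => [be||] // _ _.
    by exists be.
  have /fin_numPlt/andP[+ _] := theta_term_fin_num be i0 i0 j0 j0.
  move/lt_le_trans; apply; rewrite -bstarE.
  by apply: (bigmax_sup i0) => //; apply: (bigmax_sup i0) => //;
     apply: (bigmax_sup j0) => //; apply: (bigmax_sup j0).
apply: bigmax_lt => // i _; apply: bigmax_lt => // k _.
apply: bigmax_lt => // j _; apply: bigmax_lt => // l _.
case: (bstar b i k) (bstar_neqy i k) => [be||] // _; last by rewrite theta_term_Ny.
by have /fin_numPlt/andP[] := theta_term_fin_num be i k j l.
Qed.

Lemma theta_le_objective x : feasible x -> theta <= objective x.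
Proof.
move=> x_feas; rewrite -(fineK theta_fin_num); apply: le_EFin_bound => phi obj_le.
rewrite -lee_fin fineK ?theta_fin_num //; apply/theta_le => i k.
have [x_sub x_box] := (feasible_objective_le x phi).1 (conj x_feas obj_le).
apply: le_trans (le_trans _ (subsolution_bstar x_sub i k)) _.
  by apply: leeD2l; have /andP[] := x_box k.
by have /andP[] := x_box i.
Qed.

Lemma optimal_le x :
  feasible x /\ objective x = theta <-> feasible x /\ objective x <= (fine theta)%:E.
Proof.
rewrite fineK ?theta_fin_num //; split=> [[x_feas <-] | [x_feas obj_le]] //.
by split=> //; apply: le_anti; rewrite obj_le theta_le_objective.
Qed.

Lemma optimal_solution_exists : exists x, feasible x /\ objective x = theta.
Proof.
pose t := fine theta; pose j0 := Ordinal m_gt0.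
have compat : forall i k, bstar b i k + box_lo t k <= box_hi t i.
  by apply/theta_le; rewrite fineK ?theta_fin_num.
have hi_lty i : box_hi t i < +oo by apply: le_lt_trans (bigmin_le _ j0 _) (ltry _).
have lo_fin k : box_lo t k \is a fin_num.
  apply/fin_numPlt/andP; split.
    exact: lt_le_trans (ltNyr _) (le_bigmax _ _ j0).
  apply: le_lt_trans (hi_lty k); apply: le_trans (compat k k).
  by rewrite lee_paddl ?bstar_ge0.
have [x x_sol] := subsolution_in_box_exists cycles_le0 lo_fin hi_lty compat.
by exists x; apply/optimal_le/feasible_objective_le.
Qed.

Definition param_lo (e : \bar R) k : \bar R :=
  \big[maxe/-oo]_(j < m)
     maxe (maxe (((h j)%:E - e) * ((w j)^-1)%:E + (p k j)%:E) (p k j - d j)%:E) (f k)%:E.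

Definition param_hi (e : \bar R) k : \bar R :=
  \big[mine/+oo]_(i < n) \big[mine/+oo]_(j < m)
     (mine (mine ((e - (h j)%:E) * ((w j)^-1)%:E + (p i j)%:E) (p i j + d j)%:E) (g i)%:E
      - bstar b i k).

Lemma param_boundsE k (v : R) :
  param_lo theta k <= v%:E <= param_hi theta k <->
  box_lo (fine theta) k <= v%:E /\ forall i, bstar b i k + v%:E <= box_hi (fine theta) i.
Proof.
rewrite -{1 2}(fineK theta_fin_num); set t := fine theta.
have -> : param_lo t%:E k = box_lo t k.
  by apply: eq_bigr => j _; rewrite /lower !EFin_max.
have -> : param_hi t%:E k =
    \big[mine/+oo]_(i < n) \big[mine/+oo]_(j < m) ((upper t i j)%:E - bstar b i k).
  by apply: eq_bigr => i _; apply: eq_bigr => j _; rewrite /upper !EFin_min.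
split=> [/andP[lo_v /bigmin_geP[_ v_le]] | [-> v_le] /=].
  split=> // i; apply: le_bigmin => [|j _]; first exact: leey.
  by have /bigmin_geP[_ /(_ j isT)] := v_le i isT; rewrite leeBrDl_neqy ?bstar_neqy.
apply: le_bigmin => [|i _]; first exact: leey.
apply: le_bigmin => [|j _]; first exact: leey.
by rewrite leeBrDl_neqy ?bstar_neqy // (le_trans (v_le i) (bigmin_le _ j _)).
Qed.

Lemma optimal_solutionsE x :
  feasible x /\ objective x = theta <->
  exists u : 'I_n -> R,
    (forall k, param_lo theta k <= (u k)%:E <= param_hi theta k) /\
    (forall i, (x i)%:E = \big[maxe/-oo]_(k < n) (bstar b i k + (u k)%:E)).
Proof.
apply: (iff_trans (optimal_le x)); apply: (iff_trans (feasible_objective_le x _)).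
apply: (iff_trans (subsolutions_in_box cycles_le0 _ _ x)).
by split=> -[u [u_box x_E]]; exists u; split=> // k; apply/param_boundsE.
Qed.

End MinimaxLocation.

Unset Implicit Arguments.

Theorem corollary1 (R : realFieldType) (n m : nat)
  (hn : (0 < n)%N) (hm : (0 < m)%N)
  (p : 'I_n -> 'I_m -> R) (w d h : 'I_m -> R)
  (hw : forall j, (0 < w j)%R) (hd : forall j, (0 < d j)%R)
  (b : 'I_n -> 'I_n -> \bar R) (hb : forall i k, b i k != +oo)
  (f g : 'I_n -> R) (hfg : forall i, (f i <= g i)%R)
  (H1 : forall (i : 'I_n) (t : 'I_n),
      \big[maxe/-oo]_(s : t.-tuple 'I_n) pathw b i s i <= 0)
  (H2 : forall i k : 'I_n,
      bstar b i k + maxe (\big[maxe/-oo]_(l < m) (p k l - d l)%:E) (f k)%:E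
      <= mine (\big[mine/+oo]_(j < m) (p i j + d j)%:E) (g i)%:E) :
  let F := fun x : 'I_n -> R =>
    \big[maxe/-oo]_(j < m) ((w j)%:E * chebd x (fun i => p i j) + (h j)%:E) in
  let feasible := fun x : 'I_n -> R =>
    [/\ forall j, chebd x (fun i => p i j) <= (d j)%:E,
        forall i k, b i k + (x k)%:E <= (x i)%:E
      & forall i, (f i <= x i <= g i)%R] in
  let theta :=
    \big[maxe/-oo]_(i < n) \big[maxe/-oo]_(k < n)
    \big[maxe/-oo]_(j < m) \big[maxe/-oo]_(l < m)
      maxe (maxe
        ((w l * h j / (w j + w l) + w j * h l / (w j + w l))%R%:E
           + (w j * w l / (w j + w l))%R%:E
             * (bstar b i k - (p i j)%:E + (p k l)%:E))
        ((h j)%:E + (w j)%:E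
             * (bstar b i k - (p i j)%:E + (Num.max (p k l - d l) (f k))%:E)))
        ((h l)%:E + (w l)%:E
             * (bstar b i k - (Num.min (p i j + d j) (g i))%:E + (p k l)%:E)) in
  (exists x, feasible x /\ F x = theta) /\
  (forall x, feasible x -> theta <= F x) /\
  (forall x : 'I_n -> R, (feasible x /\ F x = theta) <->
     exists u : 'I_n -> R,
       (forall k,
          \big[maxe/-oo]_(j < m)
             maxe (maxe (((h j)%:E - theta) * ((w j)^-1)%:E + (p k j)%:E)
                        (p k j - d j)%:E) (f k)%:E
          <= (u k)%:E
          <= \big[mine/+oo]_(i < n) \big[mine/+oo]_(j < m)
               (mine (mine ((theta - (h j)%:E) * ((w j)^-1)%:E + (p i j)%:E)
                           (p i j + d j)%:E) (g i)%:E
                - bstar b i k)) /\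
       (forall i, (x i)%:E = \big[maxe/-oo]_(k < n) (bstar b i k + (u k)%:E))).
Proof.
move=> F feasible theta.
split; last split.
- exact: optimal_solution_exists.
- exact: theta_le_objective.
- exact: optimal_solutionsE.
Qed.
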